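(* Let $\Gamma=(V,E)$ be a simple graph of order $n$ and size $m$. Then the global dual alliance number of $\Gamma$ satisfies $$\gamma_{a_d}(\Gamma)\ge \left\lceil\frac{\sqrt{2m+n}}{2}\right\rceil$$ and the global strong dual alliance number of $\Gamma$ satisfies $$\gamma_{\hat{a}_d}(\Gamma)\ge \left\lceil\frac{1+\sqrt{1+8(n+m)}}{4}\right\rceil.$$
   Context: For $S\subseteq V$ and $v\in V$, $N_S(v)=\{u\in S: u\sim v\}$ and $N_{V\setminus S}(v)=\{u\in V\setminus S: u\sim v\}$. A nonempty set $S\subseteq V$ is a global dual alliance if (i) $|N_S(v)|+1\ge |N_{V\setminus S}(v)|$ for every $v\in S$ and (ii) $|N_S(v)|\ge |N_{V\setminus S}(v)|+1$ for every $v\in V\setminus S$. It is a global strong dual alliance if (i') $|N_S(v)|\ge |N_{V\setminus S}(v)|$ for every $v\in S$ and (ii') $|N_S(v)|\ge |N_{V\setminus S}(v)|+2$ for every $v\in V\setminus S$. $\gamma_{a_d}(\Gamma)$ (resp. $\gamma_{\hat a_d}(\Gamma)$) is the minimum cardinality of a global dual (resp. global strong dual) alliance. *)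

From mathcomp Require Import all_boot all_order all_algebra.
From mathcomp Require Import reals.
Set Implicit Arguments. Unset Strict Implicit. Unset Printing Implicit Defensive.

Definition simple_graph (T : finType) (adj : rel T) : Prop :=
  symmetric adj /\ irreflexive adj.

Definition nbhd_in (T : finType) (adj : rel T) (S : {set T}) (v : T) : {set T} :=
  [set u in S | adj u v].

Definition edges (T : finType) (adj : rel T) : {set {set T}} :=
  [set e : {set T} | [exists x, exists y, adj x y && (e == [set x; y])]].

(* order n = #|T|, size m = #|edges adj| *)

Definition global_dual_alliance (T : finType) (adj : rel T) (S : {set T}) : bool :=
  (S != set0) &&
  [forall v in S,
     #|nbhd_in adj (~: S) v| <= #|nbhd_in adj S v| + 1]%N &&
  [forall v in ~: S,
     #|nbhd_in adj (~: S) v| + 1 <= #|nbhd_in adj S v|]%N.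

Definition global_strong_dual_alliance (T : finType) (adj : rel T) (S : {set T}) : bool :=
  (S != set0) &&
  [forall v in S,
     #|nbhd_in adj (~: S) v| <= #|nbhd_in adj S v|]%N &&
  [forall v in ~: S,
     #|nbhd_in adj (~: S) v| + 2 <= #|nbhd_in adj S v|]%N.

(* The default
   value #|T| of the min is attained by S = V whenever V is nonempty
   (V is always a global (strong) dual alliance when nonempty), so for
   n >= 1 these are exactly the paper's gamma_{a_d} and gamma_{\hat a_d}.
   For the empty graph they are 0. *)
Definition gamma_ad (T : finType) (adj : rel T) : nat :=
  \big[minn/#|T|]_(S : {set T} | global_dual_alliance adj S) #|S|.

Definition gamma_strong_ad (T : finType) (adj : rel T) : nat :=
  \big[minn/#|T|]_(S : {set T} | global_strong_dual_alliance adj S) #|S|.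

From mathcomp Require Import all_boot all_order all_algebra.
From mathcomp Require Import reals zify.
Import Order.TTheory GRing.Theory Num.Theory.

Set Implicit Arguments.
Unset Strict Implicit.
Unset Printing Implicit Defensive.

(* Count the degrees of all vertices inside and outside an alliance S of
   size s.  Inside S each vertex has at most s - 1 neighbours in S, the edges
   between S and its complement are counted once from each side, and the
   alliance inequalities bound the remaining degree sums by these two.  The
   handshake lemma then gives 2m + n <= 4 s^2 for a global dual alliance and
   8(m + n) + 1 <= (4s - 1)^2 for a global strong dual alliance; the
   ceiling bounds follow by taking square roots. *)

Lemma leq_sum_addl (I : finType) (A : {pred I}) (f g : I -> nat) (k : nat) :
  (forall i, i \in A -> f i + k <= g i) ->
  \sum_(i in A) f i + #|A| * k <= \sum_(i in A) g i.
Proof. by move=> fg; rewrite -sum_nat_const -big_split; apply: leq_sum. Qed.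

Lemma leq_sum_addr (I : finType) (A : {pred I}) (f g : I -> nat) (k : nat) :
  (forall i, i \in A -> f i <= g i + k) ->
  \sum_(i in A) f i <= \sum_(i in A) g i + #|A| * k.
Proof. by move=> fg; rewrite -sum_nat_const -big_split; apply: leq_sum. Qed.

Lemma bigminn_card_attained (T : finType) (P : pred {set T}) :
  P setT -> exists2 S, P S & \big[minn/#|T|]_(S | P S) #|S| = #|S|.
Proof.
move=> PT; apply: (big_ind (fun k => exists2 S, P S & k = #|S|)).
- by exists setT; rewrite ?cardsT.
- by move=> x y [S PS ->] [S' PS' ->]; rewrite /minn; case: ifP => _; [exists S | exists S'].
- by move=> S PS; exists S.
Qed.

Section Degrees.

Variables (T : finType) (adj : rel T).
Hypotheses (adj_sym : symmetric adj) (adj_irr : irreflexive adj).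

Local Notation N := (nbhd_in adj).

Lemma card_nbhd_in (S : {set T}) (v : T) : #|N S v| = \sum_(u in S) adj u v.
Proof.
rewrite -sum1_card (eq_bigl (fun u => (u \in S) && adj u v)) => [|u]; last by rewrite inE.
by rewrite big_mkcondr; apply: eq_bigr => u _; case: (adj u v).
Qed.

Lemma nbhd_in0 (v : T) : N set0 v = set0.
Proof. by apply/setP => u; rewrite !inE. Qed.

Lemma card_nbhd_inT (S : {set T}) (v : T) : #|N setT v| = #|N S v| + #|N (~: S) v|.
Proof. by rewrite !card_nbhd_in (big_setID S) setTI setTD. Qed.

Lemma sum_card_nbhd_in_sym (A B : {set T}) :
  \sum_(v in A) #|N B v| = \sum_(v in B) #|N A v|.
Proof.
under eq_bigr do rewrite card_nbhd_in.
rewrite exchange_big; apply: eq_bigr => u _; rewrite card_nbhd_in.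
by apply: eq_bigr => v _; rewrite adj_sym.
Qed.

Lemma card_nbhd_in_self (S : {set T}) (v : T) : v \in S -> #|N S v| <= #|S|.-1.
Proof.
move=> Sv; rewrite (cardsD1 v S) Sv add1n /=; apply: subset_leq_card.
apply/subsetP => u; rewrite !inE => /andP[-> uv]; rewrite andbT.
by apply: contraTneq uv => ->; rewrite adj_irr.
Qed.

Lemma card_edges (e : {set T}) : e \in edges adj -> #|e| = 2.
Proof.
rewrite inE => /existsP[x /existsP[y /andP[xy /eqP->]]].
by rewrite cards2; case: eqVneq xy => // ->; rewrite adj_irr.
Qed.

(* Each edge containing x is [set x; y] for a neighbour y of x. *)
Lemma card_edges_at (x : T) : #|[set e in edges adj | x \in e]| <= #|N setT x|.
Proof.
apply: leq_trans (leq_imset_card (fun y => [set x; y]) _).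
apply: subset_leq_card; apply/subsetP => e; rewrite !inE => /andP[].
move=> /existsP[a /existsP[b /andP[ab /eqP->]]]; rewrite !inE => /orP[]/eqP->.
- by apply/imsetP; exists b; rewrite // !inE adj_sym.
- by apply/imsetP; exists a; rewrite ?inE // setUC.
Qed.

Lemma handshake_leq : 2 * #|edges adj| <= \sum_v #|N setT v|.
Proof.
have -> : 2 * #|edges adj| = \sum_(e in edges adj) \sum_x (x \in e : nat).
  rewrite mulnC -sum_nat_const; apply: eq_bigr => e /card_edges <-.
  by rewrite -sum1_card big_mkcond; apply: eq_bigr => x _; case: (x \in e).
rewrite exchange_big; apply: leq_sum => x _; apply: leq_trans (card_edges_at x).
rewrite -sum1_card big_mkcond [leqRHS]big_mkcond; apply/eq_leq/eq_bigr => e _.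
by rewrite inE; case: (e \in edges adj); case: (x \in e).
Qed.

Lemma edges_degree_split (S : {set T}) :
  2 * #|edges adj| <=
  \sum_(v in S) #|N S v| + 2 * \sum_(v in S) #|N (~: S) v| + \sum_(v in ~: S) #|N (~: S) v|.
Proof.
apply: leq_trans handshake_leq _.
rewrite (eq_bigl (fun v => v \in [set: T])) => [|v]; last by rewrite inE.
rewrite (big_setID S) setTI setTD /=.
under eq_bigr do rewrite (card_nbhd_inT S).
under [X in _ + X]eq_bigr do rewrite (card_nbhd_inT S).
by rewrite !big_split /= [\sum_(v in ~: S) #|N S v|]sum_card_nbhd_in_sym; lia.
Qed.

Lemma sum_card_nbhd_in_self (S : {set T}) : \sum_(v in S) #|N S v| <= #|S| * #|S|.-1.
Proof. by rewrite -sum_nat_const; apply: leq_sum => v /card_nbhd_in_self. Qed.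

Lemma global_dual_alliance_bound (S : {set T}) :
  global_dual_alliance adj S -> 2 * #|edges adj| + #|T| <= (2 * #|S|) ^ 2.
Proof.
case/andP=> /andP[S0 /forall_inP inS] /forall_inP outS; rewrite -card_gt0 in S0.
have inS_sum := leq_sum_addr inS.
have outS_sum := leq_sum_addl outS.
rewrite [\sum_(v in ~: S) #|N S v|]sum_card_nbhd_in_sym in outS_sum.
have := edges_degree_split S; have := sum_card_nbhd_in_self S.
rewrite -(cardsC S); nia.
Qed.

Lemma global_strong_dual_alliance_card_gt0 (S : {set T}) :
  global_strong_dual_alliance adj S -> 0 < #|S|.
Proof. by case/andP=> /andP[]; rewrite card_gt0. Qed.

Lemma global_strong_dual_alliance_bound (S : {set T}) :
  global_strong_dual_alliance adj S -> 1 + 8 * (#|T| + #|edges adj|) <= (4 * #|S|).-1 ^ 2.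
Proof.
move=> SA; have S0 := global_strong_dual_alliance_card_gt0 SA.
case/andP: SA => /andP[_ /forall_inP inS] /forall_inP outS.
have inS_sum : \sum_(v in S) #|N (~: S) v| <= \sum_(v in S) #|N S v| := leq_sum _ inS.
have outS_sum := leq_sum_addl outS.
rewrite [\sum_(v in ~: S) #|N S v|]sum_card_nbhd_in_sym in outS_sum.
have := edges_degree_split S; have := sum_card_nbhd_in_self S.
rewrite -(cardsC S); nia.
Qed.

Lemma global_dual_allianceT : (0 < #|T|) -> global_dual_alliance adj setT.
Proof.
rewrite -cardsT card_gt0 => T0; rewrite /global_dual_alliance T0 setCT.
by apply/andP; split; apply/forall_inP => v; rewrite ?inE // nbhd_in0 cards0.
Qed.

Lemma global_strong_dual_allianceT : (0 < #|T|) -> global_strong_dual_alliance adj setT.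
Proof.
rewrite -cardsT card_gt0 => T0; rewrite /global_strong_dual_alliance T0 setCT.
by apply/andP; split; apply/forall_inP => v; rewrite ?inE // nbhd_in0 cards0.
Qed.

End Degrees.

Local Open Scope ring_scope.

Lemma sqrt_natr_le (R : realType) (n k : nat) : (n <= k ^ 2)%N -> Num.sqrt (n%:R : R) <= k%:R.
Proof.
by move=> nk; rewrite -(ger0_norm (ler0n R k)) -sqrtr_sqr ler_sqrt ?sqr_ge0 // expr2 -natrM ler_nat mulnn.
Qed.

Theorem theorem9 (R : realType) (T : finType) (adj : rel T) :
  simple_graph adj -> (0 < #|T|)%N ->
  Num.ceil (Num.sqrt ((2 * #|edges adj| + #|T|)%N%:R : R) / 2)
    <= (gamma_ad adj)%:Z /\
  Num.ceil ((1 + Num.sqrt (1 + 8 * (#|T| + #|edges adj|)%N%:R : R)) / 4)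
    <= (gamma_strong_ad adj)%:Z.
Proof.
move=> [adj_sym adj_irr] T0; rewrite /gamma_ad /gamma_strong_ad; split; rewrite ceil_le_int.
- have [S SA ->] := bigminn_card_attained (global_dual_allianceT adj T0).
  rewrite ler_pdivrMr // mulrC -natrM.
  exact/sqrt_natr_le/global_dual_alliance_bound.
- have [S SA ->] := bigminn_card_attained (global_strong_dual_allianceT adj T0).
  have S0 := global_strong_dual_alliance_card_gt0 SA.
  rewrite ler_pdivrMr // -lerBrDl.
  have -> : (1 + 8 * (#|T| + #|edges adj|)%:R : R) = (1 + 8 * (#|T| + #|edges adj|))%N%:R.
    by rewrite !(natrD, natrM).
  have -> : (#|S|%:~R * 4 - 1 : R) = ((4 * #|S|).-1)%:R.
    by rewrite -subn1 natrB ?muln_gt0 // natrM mulrC.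
  exact/sqrt_natr_le/global_strong_dual_alliance_bound.
Qed.
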